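(* A topological space $X$ is locally dense-connected if and only if $X$ is (homeomorphic to) the topological sum of a family of dense-connected spaces.
   Context: A space $Y$ is dense-connected if every dense subset of $Y$ (with the subspace topology) is connected. A space $X$ is locally dense-connected if for every $x\in X$ and every neighborhood $U$ of $x$ there is a neighborhood $V$ of $x$ with $V\subset U$ such that $V$ is dense-connected. *)

From HB Require Import structures.
From mathcomp Require Import all_boot all_algebra.
From mathcomp Require Import all_classical all_reals all_analysis.

Set Implicit Arguments.
Unset Strict Implicit.
Unset Printing Implicit Defensive.

Local Open Scope classical_set_scope.

(* Y is dense-connected: every dense subset of Y (with the subspace topology)
   is connected.  [connected] from MathComp-Analysis is connectedness of a set
   in its relative topology. *)
Definition dense_connected (Y : topologicalType) : Prop :=
  forall D : set Y, dense D -> connected D.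

Definition locally_dense_connected (X : topologicalType) : Prop :=
  forall (x : X) (U : set X), nbhs x U ->
    exists V : set X, [/\ nbhs x V, V `<=` U & dense_connected (set_type V)].

Definition homeomorphic (X Y : topologicalType) : Prop :=
  exists (f : X -> Y) (g : Y -> X),
    [/\ cancel f g, cancel g f, continuous f & continuous g].

From HB Require Import structures.
From mathcomp Require Import all_boot all_algebra.
From mathcomp Require Import all_classical all_reals all_analysis.

(* A space is dense-connected iff it is hyperconnected (any two nonempty
   open sets meet), and a subspace A of X is hyperconnected iff any two open
   sets of X meeting A meet inside A.  Hence X is locally dense-connected iff
   every point has arbitrarily small open hyperconnected neighbourhoods.

   (=>) Every point x has an open hyperconnected neighbourhood; the union
   [component x] of all of them is again open and hyperconnected, since the
   union of two overlapping open hyperconnected sets is hyperconnected.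
   These components partition X into open sets, i.e. x |-> component x is
   locally constant, and X is homeomorphic to the topological sum of the
   fibres of any locally constant map.
   (<=) A summand of a sum of hyperconnected spaces is an open hyperconnected
   set, so the sum is locally hyperconnected, and local hyperconnectedness is
   invariant under homeomorphism. *)

Local Open Scope classical_set_scope.

Definition hyperconnected (Y : topologicalType) : Prop :=
  forall U V : set Y, open U -> open V -> U !=set0 -> V !=set0 ->
    U `&` V !=set0.

(* The relative version for a set A of X, phrased with the open sets of X
   (see hyperconnected_subspace). *)
Definition hyperconnected_set {X : topologicalType} (A : set X) : Prop :=
  forall U V : set X, open U -> open V -> A `&` U !=set0 -> A `&` V !=set0 ->
    A `&` U `&` V !=set0.

Definition locally_hyperconnected (X : topologicalType) : Prop :=
  forall (x : X) (U : set X), nbhs x U ->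
    exists V : set X, [/\ open V, V x, V `<=` U & hyperconnected_set V].

(* If U and V are disjoint nonempty open sets, then U is a clopen proper
   subset of the dense set U `|` (~` U)°, which is thus not connected. *)
Lemma dense_connected_hyperconnected {Y : topologicalType} :
  dense_connected Y -> hyperconnected Y.
Proof.
move=> dcY U V oU oV [u Uu] [v Vv]; apply/set0P/negP => /eqP UV.
pose E := (~` U)°.
have VE : V `<=` E.
  by rewrite -open_subsetE // => x Vx Ux; have : (U `&` V) x by []; rewrite UV.
have dense_UE : dense (U `|` E).
  move=> O [w Ow] oO; case: (pselect (O `&` U !=set0)) => [[z [Oz Uz]]|nOU].
    by exists z; split => //; left.
  have OE : O `<=` E.
    by rewrite -open_subsetE // => x Ox Ux; apply: nOU; exists x.
  by exists w; split => //; right; apply: OE.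
have U_UE : U = U `|` E.
  apply: (dcY _ dense_UE U (ex_intro _ u Uu)).
  - exists U => //; apply/seteqP; split => [x Ux|x []//]; by split => //; left.
  - exists (~` E); first exact: open_closedC (open_interior _).
    apply/seteqP; split => [x Ux|x [[]//]]; split; first by left.
    by move/interior_subset.
have : U v by rewrite U_UE; right; apply: VE.
by move=> Uv; have : (U `&` V) v by []; rewrite UV.
Qed.

(* A clopen proper subset B of a dense set D gives disjoint nonempty open
   sets: the open set cutting out B and the complement of the closed one. *)
Lemma hyperconnected_dense_connected {Y : topologicalType} :
  hyperconnected Y -> dense_connected Y.
Proof.
move=> hY D dD B [b Bb] [C1 oC1 BC1] [C2 cC2 BC2].
apply/seteqP; split; first by rewrite BC1 => x [].
move=> d Dd; apply: contrapT => nBd.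
have nC2d : ~ C2 d by move=> C2d; apply: nBd; rewrite BC2.
have C1b : C1 b by move: Bb; rewrite BC1 => -[].
have oC2C := closed_openC cC2.
have [p [[C1p nC2p] Dp]] := dD _ (hY C1 (~` C2) oC1 oC2C
  (ex_intro _ b C1b) (ex_intro _ d nC2d)) (openI oC1 oC2C).
have Bp : B p by rewrite BC1.
by move: Bp; rewrite BC2 => -[].
Qed.

Lemma dense_connectedE {Y : topologicalType} :
  dense_connected Y <-> hyperconnected Y.
Proof.
split; [exact: dense_connected_hyperconnected | exact: hyperconnected_dense_connected].
Qed.

(* The open sets of the subspace A are the traces of the open sets of X. *)
Lemma hyperconnected_subspace {X : topologicalType} (A : set X) :
  hyperconnected (set_type A) <-> hyperconnected_set A.
Proof.
split=> [hA P1 P2 oP1 oP2 [x [Ax P1x]] [y [Ay P2y]] |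
         hA _ _ [P1 oP1 <-] [P2 oP2 <-] [[u Au] /= P1u] [[v Av] /= P2v]].
- have o1 : open (set_val @^-1` P1 : set (set_type A)) by exists P1.
  have o2 : open (set_val @^-1` P2 : set (set_type A)) by exists P2.
  have [[z Az] [/= P1z P2z]] := hA _ _ o1 o2
    (ex_intro _ (exist _ x (mem_set Ax)) P1x)
    (ex_intro _ (exist _ y (mem_set Ay)) P2y).
  by exists z; split; [split|]; rewrite ?set_valE //; exact: set_mem.
- have [x [[Ax P1x] P2x]] := hA P1 P2 oP1 oP2
    (ex_intro _ u (conj (set_mem Au) P1u)) (ex_intro _ v (conj (set_mem Av) P2v)).
  by exists (exist _ x (mem_set Ax)).
Qed.

Lemma hyperconnected_setS {X : topologicalType} {A B : set X} :
  hyperconnected_set A -> open B -> B `<=` A -> hyperconnected_set B.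
Proof.
move=> hA oB BA P1 P2 oP1 oP2 [x [Bx P1x]] [y [By P2y]].
have [z [[_ [Bz P1z]] [_ P2z]]] := hA (B `&` P1) (B `&` P2) (openI oB oP1)
  (openI oB oP2) (ex_intro _ x (conj (BA _ Bx) (conj Bx P1x)))
  (ex_intro _ y (conj (BA _ By) (conj By P2y))).
by exists z.
Qed.

(* Two overlapping open hyperconnected sets have a hyperconnected union: an
   open set meeting A `|` B already meets A `&` B, where A resolves the rest. *)
Lemma hyperconnected_setU {X : topologicalType} {A B : set X} :
  open A -> open B -> hyperconnected_set A -> hyperconnected_set B ->
  A `&` B !=set0 -> hyperconnected_set (A `|` B).
Proof.
move=> oA oB hA hB [c [Ac Bc]].
have meetAB P : open P -> (A `|` B) `&` P !=set0 -> (A `&` B) `&` P !=set0.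
  move=> oP [x [[Ax|Bx] Px]].
  - have [z [[Az Pz] Bz]] := hA P B oP oB (ex_intro _ x (conj Ax Px))
      (ex_intro _ c (conj Ac Bc)).
    by exists z.
  - have [z [[Bz Pz] Az]] := hB P A oP oA (ex_intro _ x (conj Bx Px))
      (ex_intro _ c (conj Bc Ac)).
    by exists z.
move=> P1 P2 oP1 oP2 /(meetAB _ oP1) [p [[Ap Bp] P1p]]
  /(meetAB _ oP2) [q [[Aq Bq] P2q]].
have [z [[Az [P1z _]] [P2z _]]] := hA (P1 `&` B) (P2 `&` B) (openI oP1 oB)
  (openI oP2 oB) (ex_intro _ p (conj Ap (conj P1p Bp)))
  (ex_intro _ q (conj Aq (conj P2q Bq))).
by exists z; split; [split; [left|]|].
Qed.

Lemma hyperconnected_range {Y X : topologicalType} {h : Y -> X} :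
  continuous h -> hyperconnected Y -> hyperconnected_set (range h).
Proof.
move=> ch hY P1 P2 oP1 oP2 [_ [[a _ <-] P1a]] [_ [[b _ <-] P2b]].
have [y [P1y P2y]] := hY (h @^-1` P1) (h @^-1` P2)
  ((continuousP h).1 ch _ oP1) ((continuousP h).1 ch _ oP2)
  (ex_intro _ a P1a) (ex_intro _ b P2b).
by exists (h y); split; [split; [exists y|]|].
Qed.

(* The reformulation of local dense-connectedness used in both directions;
   a dense-connected neighbourhood V may be replaced by its interior. *)
Lemma locally_dense_connectedE {X : topologicalType} :
  locally_dense_connected X <-> locally_hyperconnected X.
Proof.
split=> lX x U /lX [V].
- move=> [nV VU /dense_connectedE/hyperconnected_subspace hV].
  exists V°; split; [exact: open_interior | exact: nV | |].
  + by move=> y /interior_subset /VU.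
  + exact: hyperconnected_setS hV (open_interior V) (@interior_subset _ V).
- move=> [oV Vx VU hV]; exists V; split => //; first exact: open_nbhs_nbhs.
  exact/dense_connectedE/hyperconnected_subspace.
Qed.

(* Local hyperconnectedness is a topological invariant: pull back along the
   homeomorphism the neighbourhood found around the image point. *)
Lemma locally_hyperconnected_homeomorphic {X Z : topologicalType} :
  homeomorphic X Z -> locally_hyperconnected Z -> locally_hyperconnected X.
Proof.
move=> [f [g [fK gK cf cg]]] lZ x U nU.
have nU' : nbhs (f x) (g @^-1` U) by apply: (cg (f x)); rewrite fK.
have [V [oV Vfx VU hV]] := lZ _ _ nU'.
exists (f @^-1` V); split => //.
- exact: (continuousP f).1 cf _ oV.
- by move=> z /VU; rewrite /= fK.
move=> P1 P2 oP1 oP2 [a [Vfa P1a]] [b [Vfb P2b]].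
have P1gfa : (g @^-1` P1) (f a) by rewrite /= fK.
have P2gfb : (g @^-1` P2) (f b) by rewrite /= fK.
have [z [[Vz P1gz] P2gz]] := hV (g @^-1` P1) (g @^-1` P2)
  ((continuousP g).1 cg _ oP1) ((continuousP g).1 cg _ oP2)
  (ex_intro _ (f a) (conj Vfa P1gfa)) (ex_intro _ (f b) (conj Vfb P2gfb)).
by exists (g z); split; [split|] => //; rewrite /= gK.
Qed.

(* In a sum of hyperconnected spaces, the summand through a point is an open
   hyperconnected set, and so is its intersection with any open set. *)
Lemma sum_locally_hyperconnected {I : choiceType} {Y : I -> topologicalType} :
  (forall i, hyperconnected (Y i)) -> locally_hyperconnected {i : I & Y i}.
Proof.
move=> hY [i y] U nU.
have oYi : open (range (existT Y i)) := existT_open_map i _ (@openT _).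
exists (U° `&` range (existT Y i)); split.
- exact: openI (open_interior U) oYi.
- by split; [exact: nU | exists y].
- by move=> p [/interior_subset].
- have hYi := hyperconnected_range (@existT_continuous _ Y i) (hY i).
  apply: (hyperconnected_setS hYi); last exact: subIsetr.
  exact: openI (open_interior U) oYi.
Qed.

Section HyperconnectedComponents.
Variable X : topologicalType.
Hypothesis hyperconnected_nbhd :
  forall x : X, exists H : set X, [/\ open H, H x & hyperconnected_set H].

Definition component (x : X) : set X :=
  [set y | exists H : set X, [/\ open H, H x, hyperconnected_set H & H y]].

Lemma component_open (x : X) : open (component x).
Proof.
rewrite openE => y [H [oH Hx hH Hy]].
apply: (@filterS _ _ _ H); last exact: open_nbhs_nbhs.
by move=> z Hz; exists H.
Qed.

Lemma component_center (x : X) : component x x.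
Proof. by have [H [oH Hx hH]] := hyperconnected_nbhd x; exists H. Qed.

Lemma component_max {x : X} {H : set X} :
  open H -> H x -> hyperconnected_set H -> H `<=` component x.
Proof. by move=> oH Hx hH y Hy; exists H. Qed.

(* Two points of component x lie in a common open hyperconnected set
   containing x, namely the union of the two witnesses. *)
Lemma component_hyperconnected (x : X) : hyperconnected_set (component x).
Proof.
move=> P1 P2 oP1 oP2 [a [[H1 [oH1 H1x hH1 H1a]] P1a]]
  [b [[H2 [oH2 H2x hH2 H2b]] P2b]].
have hH := hyperconnected_setU oH1 oH2 hH1 hH2 (ex_intro _ x (conj H1x H2x)).
have [z [[Hz P1z] P2z]] := hH P1 P2 oP1 oP2
  (ex_intro _ a (conj (or_introl H1a) P1a))
  (ex_intro _ b (conj (or_intror H2b) P2b)).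
exists z; split; [split|] => //.
exact: component_max (openU oH1 oH2) (or_introl H1x) hH _ Hz.
Qed.

(* Components are maximal, hence any two of them coincide or are disjoint. *)
Lemma component_eq (x y : X) : component x y -> component y = component x.
Proof.
move=> xy; apply/seteqP; split; last first.
  exact: component_max (component_open x) xy (component_hyperconnected x).
have hU := hyperconnected_setU (component_open x) (component_open y)
  (component_hyperconnected x) (component_hyperconnected y)
  (ex_intro _ y (conj xy (component_center y))).
move=> z Cyz; apply: (component_max (openU (component_open x) (component_open y))
  (or_introl (component_center x)) hU); by right.
Qed.

Lemma component_fiber (x : X) : component @^-1` [set component x] = component x.
Proof.
apply/seteqP; split => [z /= <-|z /component_eq //]; exact: component_center.
Qed.

Lemma component_fiber_open (A : set X) : open (component @^-1` [set A]).
Proof.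
rewrite openE => x /= <-; rewrite component_fiber.
by apply: open_nbhs_nbhs; split; [exact: component_open | exact: component_center].
Qed.

(* Every fibre of the component map is empty or a component. *)
Lemma component_fiber_hyperconnected (A : set X) :
  hyperconnected_set (component @^-1` [set A]).
Proof.
move=> P1 P2 oP1 oP2 [x [/= Ax P1x]]; rewrite -Ax component_fiber => P2meet.
by apply: component_hyperconnected => //; exists x; split; [exact: component_center|].
Qed.

End HyperconnectedComponents.

(* A space is the topological sum of the fibres of any map with open fibres:
   x is sent to itself in the summand indexed by c x. *)
Lemma homeomorphic_sum_fibers (X : topologicalType) (I : choiceType) (c : X -> I) :
  (forall i, open (c @^-1` [set i])) ->
  homeomorphic X {i : I & set_type (c @^-1` [set i])}.
Proof.
move=> oF.
pose F i : topologicalType := set_type (c @^-1` [set i]).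
pose f x : {i : I & F i} := existT F (c x) (exist _ x (mem_set (erefl (c x)))).
pose g (p : {i : I & F i}) : X := set_val (projT2 p).
have fE i x (h : x \in c @^-1` [set i]) : f x = existT F i (exist _ x h).
  have cx : c x = i := set_mem h.
  move: h; rewrite -cx => h; rewrite /f.
  by do 2 f_equal; exact: Prop_irrelevance.
exists f, g; split.
- by [].
- by case=> i [x h]; rewrite /g /= (fE _ _ h).
- apply/continuousP => W oW; rewrite openE => x Wx.
  have [Q oQ EQ] := (sigT_openP W).1 oW (c x).
  have hx : x \in c @^-1` [set c x] := mem_set (erefl _).
  apply: (@filterS _ _ _ (Q `&` c @^-1` [set c x])); last first.
    apply: open_nbhs_nbhs; split; first exact: openI oQ (oF _).
    split => //; have : (existT F (c x) @^-1` W) (exist _ x hx).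
      by move: Wx; rewrite /= (fE _ _ hx).
    by rewrite -EQ.
  move=> z [Qz /= czx].
  have hz : z \in c @^-1` [set c x] := mem_set czx.
  rewrite /= (fE _ _ hz).
  have : (set_val @^-1` Q) (exist _ z hz) by [].
  by rewrite EQ.
- by apply/continuousP => W oW; apply/sigT_openP => i; exists W.
Qed.

Theorem theorem4p17 (X : topologicalType) :
  locally_dense_connected X <->
  exists (I : choiceType) (Y : I -> topologicalType),
    (forall i, dense_connected (Y i)) /\ homeomorphic X {i : I & Y i}.
Proof.
split=> [/locally_dense_connectedE lX | [I [Y [dcY hXY]]]].
- have nbhdX x : exists H : set X, [/\ open H, H x & hyperconnected_set H].
    by have [V [oV Vx _ hV]] := lX x setT filterT; exists V.
  exists (set X), (fun A => set_type (@component X @^-1` [set A])); split.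
  + move=> A; apply/dense_connectedE/hyperconnected_subspace.
    exact: component_fiber_hyperconnected.
  + apply: homeomorphic_sum_fibers => A; exact: component_fiber_open.
- apply/locally_dense_connectedE/(locally_hyperconnected_homeomorphic hXY).
  by apply: sum_locally_hyperconnected => i; apply/dense_connectedE.
Qed.
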